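(* Let $(M,g)$ be a Lorentzian manifold of dimension $n+2$, $p\in M$, and let $T_{abcd}$ be a rank 4 tensor at $p$ with $T_{abcd}=-T_{bacd}=T_{cdab}$. Suppose there is a null frame $(\ell,n,m_3,\dots,m_{n+2})$ of $T_pM$ with respect to which all frame components of $T_{abcd}$ of strictly positive boost weight vanish (i.e. $T$ is of primary alignment type II or more special). Let $\mathsf T:\wedge^2T_pM\to\wedge^2T_pM$, $F^{ab}\mapsto \tfrac12 T^{ab}{}_{cd}F^{cd}$, and $\mathsf T^s:S^2(T_pM)\to S^2(T_pM)$, $Z^{ab}\mapsto T^{a}{}_{c}{}^{b}{}_{d}Z^{cd}$. If both $\mathsf T$ and $\mathsf T^s$ are nilpotent, then $T_{abcd}$ is of type III or N, i.e. a null frame exists in which all components of $T_{abcd}$ of boost weight $0$, $1$ and $2$ vanish.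
   Context: A null frame $(\ell,n,m_i)$ consists of null vectors $\ell,n$ with $g(\ell,n)=1$ and orthonormal spacelike vectors $m_i$ orthogonal to $\ell,n$. Frame index $0$ refers to $\ell$, index $1$ to $n$, and $i,j,\dots$ to the $m_i$. The boost weight of a frame component $T_{A_1A_2A_3A_4}$ is the number of indices equal to $0$ minus the number of indices equal to $1$. $\wedge^2T_pM$ denotes contravariant bivectors and $S^2(T_pM)$ symmetric contravariant 2-tensors at $p$. *)

From HB Require Import structures.
From mathcomp Require Import all_boot all_order all_algebra.
From mathcomp Require Import reals.
Set Implicit Arguments. Unset Strict Implicit. Unset Printing Implicit Defensive.
Import Order.TTheory GRing.Theory Num.Theory.
Local Open Scope ring_scope.

(* Everything happens in the tangent space T_pM, identified with R^(n+2) via a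
   coordinate basis; the metric g_p is the Gram matrix G (g(u,v) = u^T G v). *)

Section Defs.
Variable R : realType.
Variable n : nat.
Notation N := n.+2.

Definition minkowski : 'M[R]_N :=
  \matrix_(i, j) if i == j then (if val i == 0%N then -1 else 1) else 0.

Definition lorentzian (G : 'M[R]_N) : Prop :=
  G^T = G /\ exists P : 'M[R]_N, P \in unitmx /\ P^T *m G *m P = minkowski.

(* Gram matrix of a null frame (l, n, m_3, ..., m_{n+2}); frame index 0 is l,
   1 is n, indices >= 2 are the m_i. *)
Definition null_gram : 'M[R]_N :=
  \matrix_(A, B)
    if ((val A == 0%N) && (val B == 1%N)) || ((val A == 1%N) && (val B == 0%N))
    then 1
    else if (A == B) && (1 < val A)%N then 1 else 0.

Definition null_frame (G E : 'M[R]_N) : Prop := E^T *m G *m E = null_gram.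

Definition tensor4 := 'I_N -> 'I_N -> 'I_N -> 'I_N -> R.

Definition riemann_like_sym (T : tensor4) : Prop :=
  (forall a b c d, T a b c d = - T b a c d) /\
  (forall a b c d, T a b c d = T c d a b).

Definition frame_comp (T : tensor4) (E : 'M[R]_N) (A B C D : 'I_N) : R :=
  \sum_a \sum_b \sum_c \sum_d T a b c d * E a A * E b B * E c C * E d D.

Definition bw1 (A : 'I_N) : int :=
  if val A == 0%N then 1 else if val A == 1%N then -1 else 0.

Definition boost_weight (A B C D : 'I_N) : int := bw1 A + bw1 B + bw1 C + bw1 D.

Definition Top (G : 'M[R]_N) (T : tensor4) (F : 'M[R]_N) : 'M[R]_N :=
  \matrix_(a, b) (2^-1 * \sum_e \sum_f \sum_c \sum_d
      invmx G a e * invmx G b f * T e f c d * F c d).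

Definition Tsop (G : 'M[R]_N) (T : tensor4) (Z : 'M[R]_N) : 'M[R]_N :=
  \matrix_(a, b) (\sum_e \sum_f \sum_c \sum_d
      invmx G a e * invmx G b f * T e c f d * Z c d).

Definition Top_nilpotent (G : 'M[R]_N) (T : tensor4) : Prop :=
  exists k : nat, forall F : 'M[R]_N, F^T = - F -> iter k (Top G T) F = 0.

Definition Tsop_nilpotent (G : 'M[R]_N) (T : tensor4) : Prop :=
  exists k : nat, forall Z : 'M[R]_N, Z^T = Z -> iter k (Tsop G T) Z = 0.

End Defs.

From HB Require Import structures.
From mathcomp Require Import all_boot all_order all_algebra.
From mathcomp Require Import reals zify ring lra.
Set Implicit Arguments. Unset Strict Implicit. Unset Printing Implicit Defensive.
Import Order.TTheory GRing.Theory Num.Theory.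
Local Open Scope ring_scope.

(* In a null frame in which T has no components of positive boost weight, the
   operators T and T^s preserve the filtration of 2-tensors by boost weight, so
   each of their graded parts is again nilpotent.  On weight 0 the graded part
   is self-adjoint for the (positive definite) Frobenius form, and on weight 1
   it acts on the row Z_{l m_i} through a matrix which the algebraic symmetries
   of T make skew; a nilpotent self-adjoint or skew-adjoint operator vanishes.
   Evaluating these vanishing operators on elementary (anti)symmetric tensors
   successively kills the components n l l n, n m l m, n l m m and m m m m, and
   these generate all components of boost weight 0 under the symmetries of T. *)

Section NilpotentAdjoint.
Variables (V R : zmodType) (D : V -> Prop) (ip : V -> V -> R).
Hypothesis ip0r : forall X, ip X 0 = 0.
Hypothesis ip_definite : forall X, D X -> ip X X = 0 -> X = 0.

Lemma nilpotent_selfadjoint_eq0 (Y : V -> V) (k : nat) :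
  (forall X, D X -> D (Y X)) ->
  (forall X Z, D X -> D Z -> ip (Y X) Z = ip X (Y Z)) ->
  (forall X, D X -> iter k Y X = 0) ->
  forall X, D X -> Y X = 0.
Proof.
move=> DY Yadj Ynil.
have Diter j X : D X -> D (iter j Y X) by move=> DX; elim: j => //= j /DY.
have descend j : (forall X, D X -> iter j.+2 Y X = 0) ->
    forall X, D X -> iter j.+1 Y X = 0.
  move=> Yj2 X DX; apply: ip_definite; first exact: Diter.
  rewrite iterS Yadj; [|exact: Diter|exact/DY/Diter].
  by rewrite -[Y (Y _)]/(iter j.+2 Y X) Yj2 // ip0r.
have down j : (forall X, D X -> iter j.+1 Y X = 0) -> forall X, D X -> Y X = 0.
  by elim: j => [//|j IH] /descend.
by apply: (down k) => X DX; rewrite iterSr Ynil //; apply: DY.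
Qed.

Lemma nilpotent_skewadjoint_eq0 (Y : V -> V) (k : nat) :
  (forall X, D X -> D (Y X)) ->
  (forall X Z, D X -> D Z -> ip (Y X) Z = - ip X (Y Z)) ->
  (forall X, D X -> iter k Y X = 0) ->
  forall X, D X -> Y X = 0.
Proof.
move=> DY Yadj Ynil.
have Diter j X : D X -> D (iter j Y X) by move=> DX; elim: j => //= j /DY.
have YY_eq0 : forall X, D X -> Y (Y X) = 0.
  apply: (@nilpotent_selfadjoint_eq0 (Y \o Y) k) => [X DX|X Z DX DZ|X DX] /=.
  - exact/DY/DY.
  - by rewrite (Yadj _ _ (DY _ DX) DZ) (Yadj _ _ DX (DY _ DZ)) opprK.
  - have iter_comp j x : iter j (Y \o Y) x = iter (j + j) Y x.
      by elim: j => //= j IH; rewrite addnS /= IH.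
    by rewrite iter_comp iterD Ynil //; apply: Diter.
move=> X DX; apply: ip_definite; first exact: DY.
by rewrite (Yadj _ _ DX (DY _ DX)) YY_eq0 // ip0r oppr0.
Qed.

End NilpotentAdjoint.

Section FrameIndices.
Variable n : nat.
Local Notation N := n.+2.

Definition iL : 'I_N := ord0.
Definition iN : 'I_N := lift ord0 ord0.
Definition iM (i : 'I_n) : 'I_N := lift ord0 (lift ord0 i).

Variant frame_index_spec : 'I_N -> Type :=
  | FrameIdxL : frame_index_spec iL
  | FrameIdxN : frame_index_spec iN
  | FrameIdxM i : frame_index_spec (iM i).

Lemma frame_indexP A : frame_index_spec A.
Proof.
case: A => [[|[|m]] Hm].
- by rewrite (_ : Ordinal Hm = iL); [constructor | apply: val_inj].
- by rewrite (_ : Ordinal Hm = iN); [constructor | apply: val_inj].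
- have Hm' : (m < n)%N := Hm.
  by rewrite (_ : Ordinal Hm = iM (Ordinal Hm')); [constructor | apply: val_inj].
Qed.

Lemma iM_inj : injective iM.
Proof. by move=> i j /lift_inj /lift_inj. Qed.

(* The Gram matrix of a null frame is eta_{AB} = [B == dual A]. *)
Definition dual (A : 'I_N) : 'I_N :=
  if A == iL then iN else if A == iN then iL else A.

Lemma dualL : dual iL = iN. Proof. by []. Qed.
Lemma dualN : dual iN = iL. Proof. by []. Qed.
Lemma dualM i : dual (iM i) = iM i. Proof. by []. Qed.

Lemma dualK : involutive dual.
Proof. by move=> A; case: (frame_indexP A). Qed.

Lemma dual_inj : injective dual. Proof. exact: inv_inj dualK. Qed.

Lemma bw1_dual A : bw1 (dual A) = - bw1 A.
Proof. by case: (frame_indexP A). Qed.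

Definition bw2 (A B : 'I_N) : int := bw1 A + bw1 B.

Lemma bw2C A B : bw2 A B = bw2 B A. Proof. exact: addrC. Qed.

Lemma bw2_dual A B : bw2 (dual A) (dual B) = - bw2 A B.
Proof. by rewrite /bw2 !bw1_dual opprD. Qed.

Lemma boost_weightE A B C D : boost_weight A B C D = bw2 A B + bw2 C D.
Proof. by rewrite /boost_weight /bw2 !addrA. Qed.

Lemma boost_weightE_sym A B C D : boost_weight A C B D = bw2 A B + bw2 C D.
Proof. rewrite /boost_weight /bw2; ring. Qed.

Lemma sum_frame_idx (R : nmodType) (f : 'I_N -> R) :
  \sum_A f A = f iL + f iN + \sum_i f (iM i).
Proof. by rewrite big_ord_recl big_ord_recl addrA. Qed.

End FrameIndices.

Arguments iL {n}.
Arguments iN {n}.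
Arguments dual_inj {n}.
Arguments iM_inj {n}.
Arguments dualK {n}.

Lemma mul_self_ge0 (R : realDomainType) (x : R) : 0 <= x * x.
Proof. by rewrite -expr2 sqr_ge0. Qed.

Lemma sum_mul_self_eq0 (R : realDomainType) (I : finType) (f : I -> R) :
  \sum_i f i * f i = 0 -> forall i, f i = 0.
Proof.
move=> sum0 i; apply/eqP; rewrite -sqrf_eq0 expr2.
by rewrite (psumr_eq0P (fun j _ => mul_self_ge0 (f j)) sum0).
Qed.

Lemma sum_exchange22 (R : nmodType) (I : finType) (F : I -> I -> I -> I -> R) :
  \sum_a \sum_b \sum_c \sum_d F a b c d = \sum_c \sum_d \sum_a \sum_b F a b c d.
Proof.
transitivity (\sum_a \sum_c \sum_d \sum_b F a b c d).
  by apply: eq_bigr => a _; rewrite exchange_big; apply: eq_bigr => c _; rewrite exchange_big.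
by rewrite exchange_big; apply: eq_bigr => c _; rewrite exchange_big.
Qed.

Section Weights.
Variables (R : realFieldType) (n : nat).
Local Notation N := n.+2.
Implicit Types (X Z : 'M[R]_N) (w : int).

Definition wt_ge w Z := forall A B, bw2 A B < w -> Z A B = 0.
Definition homog w Z := forall A B, bw2 A B != w -> Z A B = 0.
Definition wt_proj w Z : 'M[R]_N :=
  \matrix_(A, B) if bw2 A B == w then Z A B else 0.

Lemma homog_wt_ge w Z : homog w Z -> wt_ge w Z.
Proof. by move=> Zw A B lt_w; rewrite Zw // lt_eqF. Qed.

Lemma wt_projE w Z A B : bw2 A B = w -> wt_proj w Z A B = Z A B.
Proof. by move=> wAB; rewrite mxE wAB eqxx. Qed.

Lemma wt_proj_id w Z : homog w Z -> wt_proj w Z = Z.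
Proof. by move=> Zw; apply/matrixP => A B; rewrite mxE; case: eqP => // /eqP /Zw ->. Qed.

Lemma wt_proj_homog w Z : homog w (wt_proj w Z).
Proof. by move=> A B /negbTE wAB; rewrite mxE wAB. Qed.

Lemma wt_proj0 w : wt_proj w 0 = 0.
Proof. by apply/matrixP => A B; rewrite !mxE; case: ifP. Qed.

Lemma wt_proj_tr w Z : (wt_proj w Z)^T = wt_proj w Z^T.
Proof. by apply/matrixP => A B; rewrite !mxE bw2C. Qed.

Lemma wt_projN w Z : wt_proj w (- Z) = - wt_proj w Z.
Proof. by apply/matrixP => A B; rewrite !mxE; case: ifP; rewrite ?oppr0. Qed.

Lemma wt_projZ w a Z : wt_proj w (a *: Z) = a *: wt_proj w Z.
Proof. by apply/matrixP => A B; rewrite !mxE; case: ifP; rewrite ?mulr0. Qed.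

Lemma entry_eq0 Z A B : Z = 0 -> Z A B = 0.
Proof. by move=> ->; rewrite mxE. Qed.

Lemma tr_scale_entry a Z A B : Z^T = a *: Z -> Z B A = a * Z A B.
Proof. by move/matrixP/(_ A B); rewrite !mxE. Qed.

Lemma homog0_sym_dual Z : homog 0 Z -> Z^T = Z -> forall A B, Z (dual A) (dual B) = Z A B.
Proof.
move=> Z0 ZT A B; have ZT1 : Z^T = 1 *: Z by rewrite scale1r.
case: (frame_indexP A) => [||i]; case: (frame_indexP B) => [||j];
  rewrite ?dualL ?dualN ?dualM //; try by rewrite !Z0.
- by rewrite (tr_scale_entry iN iL ZT1) mul1r.
- by rewrite (tr_scale_entry iL iN ZT1) mul1r.
Qed.

Lemma sum_homog1 (g : 'I_N -> 'I_N -> R) Z : homog 1 Z ->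
  \sum_c \sum_d g c d * Z c d =
  \sum_i (g iL (iM i) * Z iL (iM i) + g (iM i) iL * Z (iM i) iL).
Proof.
move=> Z1; rewrite big_split /= !sum_frame_idx.
rewrite (Z1 iL iL) // (Z1 iL iN) // (Z1 iN iL) // (Z1 iN iN) //.
rewrite [X in _ + (_ + X) + _]big1 => [|i _]; last by rewrite Z1 ?mulr0.
rewrite !mulr0 !add0r !addr0; congr (_ + _); apply: eq_bigr => i _.
rewrite sum_frame_idx (Z1 (iM i) iN) // big1 ?mulr0 ?addr0 // => j _.
by rewrite Z1 ?mulr0.
Qed.

Definition lrow_dot X Z := \sum_i X iL (iM i) * Z iL (iM i).

Lemma homog1_eq0 s Z : homog 1 Z -> Z^T = s *: Z ->
  lrow_dot Z Z = 0 -> Z = 0.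
Proof.
move=> Z1 ZT /sum_mul_self_eq0 Zrow; apply/matrixP => A B; rewrite mxE.
case: (frame_indexP A) => [||i]; case: (frame_indexP B) => [||j];
  try by rewrite Z1.
- exact: Zrow.
- by rewrite (tr_scale_entry iL (iM i) ZT) Zrow mulr0.
Qed.

Definition frob X Z := \sum_A \sum_B X A B * Z A B.

Lemma frob0r X : frob X 0 = 0.
Proof. by rewrite /frob big1 // => A _; rewrite big1 // => B _; rewrite mxE mulr0. Qed.

Lemma frobC X Z : frob X Z = frob Z X.
Proof. by apply: eq_bigr => A _; apply: eq_bigr => B _; rewrite mulrC. Qed.

Lemma frob_eq0 X : frob X X = 0 -> X = 0.
Proof.
rewrite /frob pair_bigA => /= /sum_mul_self_eq0 X0.
by apply/matrixP => A B; rewrite mxE (X0 (A, B)).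
Qed.

Lemma frob_wt_projl w Y Z : homog w Z -> frob (wt_proj w Y) Z = frob Y Z.
Proof.
move=> Zw; apply: eq_bigr => A _; apply: eq_bigr => B _; rewrite mxE.
by case: eqP => // /eqP /Zw ->; rewrite !mulr0.
Qed.

Definition pair_mx (x y : 'I_N) (s : R) : 'M[R]_N := delta_mx x y + s *: delta_mx y x.

Lemma sum_delta_mx (g : 'I_N -> 'I_N -> R) x y :
  \sum_c \sum_d g c d * delta_mx x y c d = g x y.
Proof.
rewrite (bigD1 x) //= [X in _ + X]big1 ?addr0; last first.
  by move=> c /negbTE xc; rewrite big1 // => d _; rewrite mxE xc mulr0.
rewrite (bigD1 y) //= [X in _ + X]big1 ?addr0; last first.
  by move=> d /negbTE yd; rewrite mxE yd andbF mulr0.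
by rewrite mxE !eqxx mulr1.
Qed.

Lemma sum_pair_mx (g : 'I_N -> 'I_N -> R) x y s :
  \sum_c \sum_d g c d * pair_mx x y s c d = g x y + s * g y x.
Proof.
rewrite -(sum_delta_mx g x y) -(sum_delta_mx g y x) mulr_sumr -big_split /=.
apply: eq_bigr => c _; rewrite mulr_sumr -big_split /=; apply: eq_bigr => d _.
by rewrite !mxE; ring.
Qed.

Lemma pair_mx_tr x y s : s * s = 1 -> (pair_mx x y s)^T = s *: pair_mx x y s.
Proof.
move=> ss1; rewrite /pair_mx linearD linearZ /= !trmx_delta.
by rewrite scalerDr scalerA ss1 scale1r addrC.
Qed.

Lemma pair_mx_homog w x y s : bw2 x y = w -> homog w (pair_mx x y s).
Proof.
move=> <- c d cd_w; rewrite !mxE.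
have -> : (c == x) && (d == y) = false.
  by apply: contraNF cd_w => /andP[/eqP-> /eqP->].
have -> : (c == y) && (d == x) = false.
  by apply: contraNF cd_w => /andP[/eqP-> /eqP->]; rewrite bw2C.
by rewrite mulr0 addr0.
Qed.

Definition spatial Z := forall A B, (A \in [:: iL; iN]) || (B \in [:: iL; iN]) -> Z A B = 0.

Lemma spatial_homog0 Z : spatial Z -> homog 0 Z.
Proof.
move=> ZS A B; case: (frame_indexP A) => [||i]; case: (frame_indexP B) => [||j] //.
all: by rewrite ZS.
Qed.

Lemma spatial_dual Z : spatial Z -> forall A B, Z (dual A) (dual B) = Z A B.
Proof.
move=> ZS A B; case: (frame_indexP A) => [||i]; case: (frame_indexP B) => [||j];
  rewrite ?dualL ?dualN ?dualM //; by rewrite !ZS.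
Qed.

Lemma pair_mx_spatial i j s : spatial (pair_mx (iM i) (iM j) s).
Proof.
move=> c d cd_LN; rewrite !mxE.
have [/andP[/eqP cM /eqP dM]|] := boolP ((c == iM i) && (d == iM j)).
  by rewrite cM dM in cd_LN.
have [/andP[/eqP cM /eqP dM]|] := boolP ((c == iM j) && (d == iM i)).
  by rewrite cM dM in cd_LN.
by move=> _ _; rewrite /= mulr0 addr0.
Qed.

End Weights.

Section FrameOperator.
Variables (R : realFieldType) (n : nat).
Local Notation N := n.+2.
Local Notation form := ('I_N -> 'I_N -> 'I_N -> 'I_N -> R).

(* Z^{cd} |-> rho^{AB}_{cd} Z^{cd}, indices raised with the null frame metric. *)
Definition frame_op (rho : form) (Z : 'M[R]_N) : 'M[R]_N :=
  \matrix_(A, B) \sum_c \sum_d rho (dual A) (dual B) c d * Z c d.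

Lemma frame_opE rho Z A B :
  frame_op rho Z A B = \sum_c \sum_d rho (dual A) (dual B) c d * Z c d.
Proof. by rewrite mxE. Qed.

Lemma frame_opZ rho a Z : frame_op rho (a *: Z) = a *: frame_op rho Z.
Proof.
apply/matrixP => A B; rewrite !mxE mulr_sumr; apply: eq_bigr => c _.
by rewrite mulr_sumr; apply: eq_bigr => d _; rewrite mxE; ring.
Qed.

Lemma frame_opN rho Z : frame_op rho (- Z) = - frame_op rho Z.
Proof. by rewrite -scaleN1r frame_opZ scaleN1r. Qed.

Section TypeII.
Variable rho : form.
Hypothesis rho_bw_gt0 : forall A B c d, 0 < bw2 A B + bw2 c d -> rho A B c d = 0.
Hypothesis rho_pair : forall A B c d, rho A B c d = rho c d A B.
Hypothesis rho_swap : forall A B c d, rho B A c d = rho A B d c.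

Lemma frame_op_tr Z : (frame_op rho Z)^T = frame_op rho Z^T.
Proof.
apply/matrixP => A B; rewrite !mxE exchange_big.
by apply: eq_bigr => c _; apply: eq_bigr => d _; rewrite rho_swap mxE.
Qed.

Lemma frame_op_wt_ge w Z : wt_ge w Z -> wt_ge w (frame_op rho Z).
Proof.
move=> Zw A B lt_w; rewrite mxE big1 // => c _; rewrite big1 // => d _.
have [pos|] := boolP (0 < bw2 (dual A) (dual B) + bw2 c d).
  by rewrite rho_bw_gt0 // mul0r.
by rewrite -leNgt bw2_dual => le0; rewrite Zw ?mulr0 //; lia.
Qed.

Lemma wt_proj_frame_op w Z : wt_ge w Z ->
  wt_proj w (frame_op rho Z) = wt_proj w (frame_op rho (wt_proj w Z)).
Proof.
move=> Zw; apply/matrixP => A B; rewrite !mxE; case: eqP => // wAB.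
apply: eq_bigr => c _; apply: eq_bigr => d _; rewrite mxE; case: eqP => // /eqP wcd.
have [lt_w|] := boolP (bw2 c d < w); first by rewrite Zw.
rewrite -leNgt => le_w; rewrite rho_bw_gt0 ?mul0r // bw2_dual wAB.
by move: wcd; rewrite neq_lt ltNge le_w /=; lia.
Qed.

Lemma wt_proj_iter w k Z : wt_ge w Z ->
  wt_proj w (iter k (frame_op rho) Z) = iter k (wt_proj w \o frame_op rho) (wt_proj w Z).
Proof.
move=> Zw; elim: k => //= k IH.
rewrite wt_proj_frame_op ?IH //.
by elim: k {IH} => //= k; apply: frame_op_wt_ge.
Qed.

Lemma graded_nilpotent w k (Q : 'M[R]_N -> Prop) :
  (forall Z, Q Z -> iter k (frame_op rho) Z = 0) ->
  forall Z, Q Z -> homog w Z -> iter k (wt_proj w \o frame_op rho) Z = 0.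
Proof.
move=> nil Z QZ Zw.
by rewrite -(wt_proj_id Zw) -wt_proj_iter ?nil ?wt_proj0 //; apply: homog_wt_ge.
Qed.

Lemma frob_frame_op (X Z : 'M[R]_N) :
  (forall A B, X (dual A) (dual B) = X A B) ->
  (forall A B, Z (dual A) (dual B) = Z A B) ->
  frob (frame_op rho X) Z = frob X (frame_op rho Z).
Proof.
move=> Xdual Zdual; rewrite /frob.
transitivity (\sum_A \sum_B \sum_c \sum_d rho A B c d * X c d * Z A B).
  rewrite (reindex_inj dual_inj); apply: eq_bigr => A _.
  rewrite (reindex_inj dual_inj); apply: eq_bigr => B _.
  rewrite mxE !dualK Zdual mulr_suml; apply: eq_bigr => c _; exact: mulr_suml.
rewrite sum_exchange22 [RHS](reindex_inj dual_inj); apply: eq_bigr => c _.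
rewrite [RHS](reindex_inj dual_inj); apply: eq_bigr => d _.
rewrite frame_opE !dualK Xdual mulr_sumr; apply: eq_bigr => A _; rewrite mulr_sumr.
by apply: eq_bigr => B _; rewrite (rho_pair A); ring.
Qed.

Lemma weight0_block_eq0 (D Q : 'M[R]_N -> Prop) k :
  (forall Z, Q Z -> iter k (frame_op rho) Z = 0) ->
  (forall X, D X -> Q X /\ homog 0 X) ->
  (forall X, D X -> D (wt_proj 0 (frame_op rho X))) ->
  (forall X, D X -> forall A B, X (dual A) (dual B) = X A B) ->
  forall X, D X -> wt_proj 0 (frame_op rho X) = 0.
Proof.
move=> nil DQ Dstable Ddual X DX.
apply: (nilpotent_selfadjoint_eq0 (ip := @frob _ _) _ _ (Y := wt_proj 0 \o frame_op rho)
  (k := k) _ _ _ DX).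
- exact: frob0r.
- by move=> Y _ /frob_eq0.
- exact: Dstable.
- move=> Y Z DY DZ /=; have [_ Y0] := DQ Y DY; have [_ Z0] := DQ Z DZ.
  rewrite frob_wt_projl // (frob_frame_op (Ddual _ DY) (Ddual _ DZ)).
  by rewrite [RHS]frobC frob_wt_projl // frobC.
- by move=> W DW; have [QW W0] := DQ W DW; apply: (graded_nilpotent nil).
Qed.

(* The matrix of the weight-1 part of frame_op rho on tensors Z with
   Z^T = s Z, in the coordinates Z_{l m_i} (see frame_op_lrow). *)
Definition lm_block (s : R) (j i : 'I_n) : R :=
  rho iN (iM j) iL (iM i) + s * rho iN (iM j) (iM i) iL.

Lemma frame_op_lrow s Z : homog 1 Z -> Z^T = s *: Z -> forall j,
  frame_op rho Z iL (iM j) = \sum_i lm_block s j i * Z iL (iM i).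
Proof.
move=> Z1 ZT j; rewrite frame_opE dualL dualM sum_homog1 //; apply: eq_bigr => i _.
by rewrite (tr_scale_entry iL (iM i) ZT) /lm_block; ring.
Qed.

Lemma lm_block_eq0 s k : s * s = 1 ->
  (forall Z, Z^T = s *: Z -> iter k (frame_op rho) Z = 0) ->
  (forall j i, lm_block s j i = - lm_block s i j) ->
  forall j i, lm_block s j i = 0.
Proof.
move=> ss1 nil skew.
pose D (Z : 'M[R]_N) := homog 1 Z /\ Z^T = s *: Z.
have graded_eq0 Z : D Z -> wt_proj 1 (frame_op rho Z) = 0.
  move=> DZ; apply: (nilpotent_skewadjoint_eq0 (ip := @lrow_dot _ _) _ _
    (Y := wt_proj 1 \o frame_op rho) (k := k) _ _ _ DZ).
  - by move=> X; rewrite /lrow_dot big1 // => i _; rewrite mxE mulr0.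
  - by move=> X [X1 XT] /(homog1_eq0 X1 XT).
  - move=> X [_ XT]; split; first exact: wt_proj_homog.
    by rewrite /= wt_proj_tr frame_op_tr XT frame_opZ wt_projZ.
  - move=> X Y [X1 XT] [Y1 YT]; rewrite /lrow_dot /=.
    transitivity (\sum_j \sum_i lm_block s j i * X iL (iM i) * Y iL (iM j)).
      by apply: eq_bigr => j _; rewrite wt_projE // (frame_op_lrow X1 XT) mulr_suml.
    rewrite exchange_big -sumrN; apply: eq_bigr => i _.
    rewrite wt_projE // (frame_op_lrow Y1 YT) mulr_sumr -sumrN; apply: eq_bigr => j _.
    by rewrite skew; ring.
  - by move=> X [X1 XT]; apply: (graded_nilpotent (Q := fun Z => Z^T = s *: Z)).
move=> j i; have Dpair : D (pair_mx iL (iM i) s).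
  by split; [exact: pair_mx_homog | exact: pair_mx_tr].
have := congr1 (fun M : 'M[R]_N => M iL (iM j)) (graded_eq0 _ Dpair).
by rewrite /= wt_projE // frame_opE dualL dualM sum_pair_mx mxE.
Qed.

End TypeII.

End FrameOperator.

Definition half_form (R : fieldType) (I : Type) (tau : I -> I -> I -> I -> R) :
  I -> I -> I -> I -> R := fun A B C D => 2^-1 * tau A B C D.

Definition sym_form (T I : Type) (tau : I -> I -> I -> I -> T) :
  I -> I -> I -> I -> T := fun A B C D => tau A C B D.

Section BoostWeightZero.
Variables (R : realFieldType) (n : nat).
Local Notation N := n.+2.
Variable tau : 'I_N -> 'I_N -> 'I_N -> 'I_N -> R.
Hypothesis tau_asym : forall A B C D, tau A B C D = - tau B A C D.
Hypothesis tau_pair : forall A B C D, tau A B C D = tau C D A B.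
Hypothesis tau_bw_gt0 : forall A B C D, 0 < boost_weight A B C D -> tau A B C D = 0.
Variables k1 k2 : nat.
Hypothesis half_nil :
  forall F, F^T = - F -> iter k1 (frame_op (half_form tau)) F = 0.
Hypothesis sym_nil :
  forall Z, Z^T = Z -> iter k2 (frame_op (sym_form tau)) Z = 0.

Lemma tau_asymr A B C D : tau A B C D = - tau A B D C.
Proof. by rewrite tau_pair tau_asym tau_pair. Qed.

Lemma tau_diagl A C D : tau A A C D = 0.
Proof. by have := tau_asym A A C D; lra. Qed.

Lemma tau_diagr A B C : tau A B C C = 0.
Proof. by have := tau_asymr A B C C; lra. Qed.

Lemma half_form_bw_gt0 A B C D :
  0 < bw2 A B + bw2 C D -> half_form tau A B C D = 0.
Proof. by move=> pos; rewrite /half_form tau_bw_gt0 ?mulr0 // boost_weightE. Qed.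

Lemma half_form_pair A B C D : half_form tau A B C D = half_form tau C D A B.
Proof. by rewrite /half_form tau_pair. Qed.

Lemma half_form_swap A B C D : half_form tau B A C D = half_form tau A B D C.
Proof. by rewrite /half_form tau_asym tau_asymr opprK. Qed.

Lemma sym_form_bw_gt0 A B C D :
  0 < bw2 A B + bw2 C D -> sym_form tau A B C D = 0.
Proof. by move=> pos; rewrite /sym_form tau_bw_gt0 // boost_weightE_sym. Qed.

Lemma sym_form_pair A B C D : sym_form tau A B C D = sym_form tau C D A B.
Proof. by rewrite /sym_form tau_pair tau_asym tau_asymr opprK tau_pair. Qed.

Lemma sym_form_swap A B C D : sym_form tau B A C D = sym_form tau A B D C.
Proof. by rewrite /sym_form tau_pair. Qed.

Lemma sym_weight0_eq0 X : homog 0 X -> X^T = X ->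
  wt_proj 0 (frame_op (sym_form tau) X) = 0.
Proof.
move=> X0 XT.
apply: (weight0_block_eq0 sym_form_bw_gt0 sym_form_pair
  (D := fun Y => homog 0 Y /\ Y^T = Y) sym_nil _ _ _ (conj X0 XT)).
- by move=> Y [Y0 YT].
- move=> Y [_ YT]; split; first exact: wt_proj_homog.
  by rewrite wt_proj_tr (frame_op_tr sym_form_swap) YT.
- by move=> Y [Y0 YT]; exact: homog0_sym_dual.
Qed.

Lemma sym_weight0_LN_eq0 : wt_proj 0 (frame_op (sym_form tau) (pair_mx iL iN 1)) = 0.
Proof.
apply: sym_weight0_eq0; first exact: pair_mx_homog.
by rewrite pair_mx_tr ?mulr1 ?scale1r.
Qed.

Lemma tau_nlln : tau iN iL iL iN = 0.
Proof.
have := entry_eq0 iL iN sym_weight0_LN_eq0.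
by rewrite wt_projE // frame_opE dualL dualN sum_pair_mx /sym_form tau_diagl mulr0 addr0.
Qed.

Lemma tau_mlmn i j : tau (iM i) iL (iM j) iN + tau (iM i) iN (iM j) iL = 0.
Proof.
have := entry_eq0 (iM i) (iM j) sym_weight0_LN_eq0.
by rewrite wt_projE // frame_opE !dualM sum_pair_mx mul1r.
Qed.

Lemma tau_nmlm j i : tau iN (iM j) iL (iM i) = 0.
Proof.
have nil Z : Z^T = (-1) *: Z -> iter k1 (frame_op (half_form tau)) Z = 0.
  by move=> ZT; apply: half_nil; rewrite ZT scaleN1r.
have skew j' i' :
    lm_block (half_form tau) (-1) j' i' = - lm_block (half_form tau) (-1) i' j'.
  have nmlm_mlmn : tau iN (iM j') iL (iM i') = tau (iM i') iL (iM j') iN.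
    by rewrite tau_pair tau_asym tau_asymr opprK.
  have nmlm_mnml : tau iN (iM i') iL (iM j') = tau (iM i') iN (iM j') iL.
    by rewrite tau_asym tau_asymr opprK.
  rewrite /lm_block /half_form.
  have := tau_asymr iN (iM j') (iM i') iL; have := tau_asymr iN (iM i') (iM j') iL.
  by have := tau_mlmn i' j'; lra.
have ss1 : (-1 : R) * -1 = 1 by rewrite mulrNN mulr1.
have := lm_block_eq0 half_form_bw_gt0 half_form_swap ss1 nil skew j i.
by rewrite /lm_block /half_form; have := tau_asymr iN (iM j) (iM i) iL; lra.
Qed.

Lemma tau_nlmm j i : tau iN iL (iM j) (iM i) = 0.
Proof.
have nil Z : Z^T = 1 *: Z -> iter k2 (frame_op (sym_form tau)) Z = 0.
  by move=> ZT; apply: sym_nil; rewrite ZT scale1r.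
have skew j' i' :
    lm_block (sym_form tau) 1 j' i' = - lm_block (sym_form tau) 1 i' j'.
  rewrite /lm_block /sym_form (tau_asymr iN iL (iM j')).
  rewrite (tau_asymr iN (iM i') (iM j')) (tau_asymr iN (iM j') (iM i')) !tau_nmlm.
  by rewrite !(oppr0, mulr0, addr0).
have := lm_block_eq0 sym_form_bw_gt0 sym_form_swap (mulr1 1) nil skew j i.
rewrite /lm_block /sym_form; have := tau_asymr iN (iM i) (iM j) iL.
by have := tau_nmlm i j; lra.
Qed.

Lemma tau_LN_spatial Y c d : spatial Y ->
  tau iN iL c d * Y c d = 0 /\ tau iL iN c d * Y c d = 0.
Proof.
move=> YS; case: (frame_indexP c) => [||k]; case: (frame_indexP d) => [||l];
  try by rewrite YS ?mulr0.
by rewrite (tau_asym iL) !tau_nlmm oppr0 !mul0r.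
Qed.

Lemma wt_proj_half_spatial Y : spatial Y ->
  spatial (wt_proj 0 (frame_op (half_form tau) Y)).
Proof.
move=> YS A B LN; rewrite mxE; case: eqP => // wAB.
rewrite frame_opE big1 // => c _; rewrite big1 // => d _; rewrite /half_form -mulrA.
have [NL LN'] := tau_LN_spatial c d YS.
move: LN wAB; case: (frame_indexP A) => [||i]; case: (frame_indexP B) => [||j] // _ _.
- by rewrite dualL dualN NL mulr0.
- by rewrite dualL dualN LN' mulr0.
Qed.

Lemma half_spatial_weight0_eq0 X : spatial X -> X^T = - X ->
  wt_proj 0 (frame_op (half_form tau) X) = 0.
Proof.
move=> XS XT.
apply: (weight0_block_eq0 half_form_bw_gt0 half_form_pair
  (D := fun Y => spatial Y /\ Y^T = - Y) half_nil _ _ _ (conj XS XT)).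
- by move=> Y [YS YT]; split; last exact: spatial_homog0.
- move=> Y [YS YT]; split; first exact: wt_proj_half_spatial.
  by rewrite wt_proj_tr (frame_op_tr half_form_swap) YT frame_opN wt_projN.
- by move=> Y [YS _]; exact: spatial_dual.
Qed.

Lemma tau_mmmm i j k l : tau (iM i) (iM j) (iM k) (iM l) = 0.
Proof.
have PT : (pair_mx (iM k) (iM l) (-1 : R))^T = - pair_mx (iM k) (iM l) (-1).
  by rewrite pair_mx_tr ?mulrNN ?mulr1 // scaleN1r.
have := entry_eq0 (iM i) (iM j) (half_spatial_weight0_eq0 (pair_mx_spatial k l _) PT).
rewrite wt_projE // frame_opE !dualM sum_pair_mx /half_form.
by have := tau_asymr (iM i) (iM j) (iM k) (iM l); lra.
Qed.

(* Every index pattern of boost weight 0 is brought to one of the patterns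
   n l l n, n m l m, n l m m, m m m m by the symmetries of tau. *)
Lemma tau_bw0_eq0 A B C D : boost_weight A B C D = 0 -> tau A B C D = 0.
Proof.
pose vanishing := (tau_nlln, tau_nmlm, tau_nlmm, tau_mmmm, tau_diagl, tau_diagr).
move=> /eqP; case: (frame_indexP A) => [||a]; case: (frame_indexP B) => [||b];
  case: (frame_indexP C) => [||c]; case: (frame_indexP D) => [||d] // _;
  first [ by rewrite vanishing
        | by rewrite tau_asym vanishing ?oppr0
        | by rewrite tau_asymr vanishing ?oppr0
        | by rewrite tau_asym tau_asymr vanishing ?oppr0
        | by rewrite tau_pair vanishing
        | by rewrite tau_pair tau_asym vanishing ?oppr0
        | by rewrite tau_pair tau_asymr vanishing ?oppr0
        | by rewrite tau_pair tau_asym tau_asymr vanishing ?oppr0 ].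
Qed.

End BoostWeightZero.

Section NullFrame.
Variables (R : realType) (n : nat).
Local Notation N := n.+2.
Local Notation eta := (null_gram R n).
Local Notation form := ('I_N -> 'I_N -> 'I_N -> 'I_N -> R).

Lemma null_gramE A B : eta A B = (B == dual A)%:R.
Proof.
rewrite mxE; case: (frame_indexP A) => [||i]; case: (frame_indexP B) => [||j] //=.
have -> : (1 < bump 0 (bump 0 i))%N by [].
by rewrite dualM andbT !(inj_eq iM_inj) [j == i]eq_sym; case: (i == j).
Qed.

Lemma null_gram_sym A B : eta A B = eta B A.
Proof. by rewrite !null_gramE [A == _]eq_sym (can2_eq dualK dualK). Qed.

Lemma sum_null_graml (f : 'I_N -> R) A : \sum_B eta A B * f B = f (dual A).
Proof.
rewrite (bigD1 (dual A)) //= null_gramE eqxx mul1r big1 ?addr0 // => B /negbTE nAB.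
by rewrite null_gramE nAB mul0r.
Qed.

Lemma sum_null_gramr (f : 'I_N -> R) B : \sum_A f A * eta A B = f (dual B).
Proof.
rewrite -(sum_null_graml f B); apply: eq_bigr => A _.
by rewrite mulrC null_gram_sym.
Qed.

Lemma null_gram_tr : eta^T = eta.
Proof. by apply/matrixP => A B; rewrite mxE null_gram_sym. Qed.

Lemma null_gram_conj (X : 'M[R]_N) A B : (eta *m X *m eta) A B = X (dual A) (dual B).
Proof.
rewrite mxE -sum_null_gramr; apply: eq_bigr => C _.
by rewrite mxE sum_null_graml.
Qed.

Lemma null_gram_mul : eta *m eta = 1%:M.
Proof.
apply/matrixP => A B; rewrite mxE sum_null_graml null_gramE !mxE.
by rewrite dualK eq_sym.
Qed.

Definition contract (U : form) (F : 'M[R]_N) : 'M[R]_N :=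
  \matrix_(e, f) \sum_c \sum_d U e f c d * F c d.

Lemma frame_op_contract rho F : frame_op rho F = eta *m contract rho F *m eta.
Proof. by apply/matrixP => A B; rewrite null_gram_conj !mxE. Qed.

Lemma contract_half_form U F : contract (half_form U) F = 2^-1 *: contract U F.
Proof.
apply/matrixP => A B; rewrite !mxE mulr_sumr; apply: eq_bigr => C _.
by rewrite mulr_sumr; apply: eq_bigr => D _; rewrite /half_form mulrA.
Qed.

Lemma contract_frame_comp U (E F : 'M[R]_N) :
  contract (frame_comp U E) F = E^T *m contract U (E *m F *m E^T) *m E.
Proof.
have inner a b : \sum_c \sum_d U a b c d * (E *m F *m E^T) c d =
    \sum_C \sum_D (\sum_c \sum_d U a b c d * E c C * E d D) * F C D.
  transitivity (\sum_c \sum_d \sum_C \sum_D U a b c d * E c C * E d D * F C D).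
    apply: eq_bigr => c _; apply: eq_bigr => d _.
    rewrite mxE mulr_sumr exchange_big; apply: eq_bigr => C _.
    rewrite mxE mulr_suml mulr_sumr; apply: eq_bigr => D _; rewrite mxE; ring.
  rewrite sum_exchange22; apply: eq_bigr => C _; apply: eq_bigr => D _.
  by rewrite mulr_suml; apply: eq_bigr => c _; rewrite mulr_suml.
apply/matrixP => X Y; rewrite [LHS]mxE.
transitivity (\sum_C \sum_D \sum_a \sum_b E a X * E b Y *
   (\sum_c \sum_d U a b c d * E c C * E d D) * F C D).
  apply: eq_bigr => C _; apply: eq_bigr => D _.
  rewrite /frame_comp mulr_suml; apply: eq_bigr => a _.
  rewrite mulr_suml; apply: eq_bigr => b _.
  congr (_ * _); rewrite mulr_sumr; apply: eq_bigr => c _.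
  by rewrite mulr_sumr; apply: eq_bigr => d _; ring.
rewrite sum_exchange22 mxE exchange_big; apply: eq_bigr => a _.
rewrite mxE mulr_suml; apply: eq_bigr => b _.
rewrite !mxE inner mulr_sumr mulr_suml; apply: eq_bigr => C _.
by rewrite mulr_sumr mulr_suml; apply: eq_bigr => D _; ring.
Qed.

Lemma raise_contract (gi : 'M[R]_N) (U : form) (F : 'M[R]_N) a b :
  \sum_e \sum_f \sum_c \sum_d gi a e * gi b f * U e f c d * F c d =
  (gi *m contract U F *m gi^T) a b.
Proof.
rewrite mxE exchange_big; apply: eq_bigr => e _.
rewrite mxE mulr_suml; apply: eq_bigr => f _.
rewrite !mxE mulr_sumr mulr_suml; apply: eq_bigr => c _.
by rewrite mulr_sumr mulr_suml; apply: eq_bigr => d _; ring.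
Qed.

Lemma Top_contract G (T : tensor4 R n) F :
  Top G T F = 2^-1 *: (invmx G *m contract T F *m (invmx G)^T).
Proof. by apply/matrixP => a b; rewrite [LHS]mxE [RHS]mxE -raise_contract. Qed.

Lemma Tsop_contract G (T : tensor4 R n) Z :
  Tsop G T Z = invmx G *m contract (sym_form T) Z *m (invmx G)^T.
Proof. by apply/matrixP => a b; rewrite [LHS]mxE -raise_contract. Qed.

Lemma frame_comp_sym_form (T : tensor4 R n) E A B C D :
  frame_comp (sym_form T) E A B C D = frame_comp T E A C B D.
Proof.
rewrite /frame_comp; apply: eq_bigr => a _; rewrite exchange_big.
apply: eq_bigr => b _; apply: eq_bigr => c _; apply: eq_bigr => d _.
by rewrite /sym_form; ring.
Qed.

Lemma riemann_like_sym_frame_comp (T : tensor4 R n) E :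
  riemann_like_sym T -> riemann_like_sym (frame_comp T E).
Proof.
move=> [T_asym T_pair]; split => A B C D; rewrite /frame_comp.
- rewrite [in RHS]exchange_big -sumrN; apply: eq_bigr => a _.
  rewrite -sumrN; apply: eq_bigr => b _; rewrite -sumrN; apply: eq_bigr => c _.
  by rewrite -sumrN; apply: eq_bigr => d _; rewrite (T_asym b a); ring.
- rewrite [RHS]sum_exchange22; apply: eq_bigr => a _; apply: eq_bigr => b _.
  apply: eq_bigr => c _; apply: eq_bigr => d _.
  by rewrite (T_pair c d); ring.
Qed.

Lemma null_frame_inv G E : null_frame G E ->
  E \in unitmx /\ invmx G = E *m eta *m E^T.
Proof.
rewrite /null_frame => EGE.
have EtGE : E^T *m (G *m E *m eta) = 1%:M by rewrite !mulmxA EGE null_gram_mul.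
have [EtU _] := mulmx1_unit EtGE.
have GEE : G *m (E *m eta *m E^T) = 1%:M by rewrite !mulmxA; exact: mulmx1C EtGE.
have [GU _] := mulmx1_unit GEE.
split; first by rewrite -unitmx_tr.
by rewrite -[LHS]mulmx1 -GEE mulKmx.
Qed.

Lemma null_frame_conj_tr (E X : 'M[R]_N) : (E *m X *m E^T)^T = E *m X^T *m E^T.
Proof. by rewrite !trmx_mul trmxK mulmxA. Qed.

Lemma Top_frame G E (T : tensor4 R n) F : null_frame G E ->
  Top G T (E *m F *m E^T) = E *m frame_op (half_form (frame_comp T E)) F *m E^T.
Proof.
move=> /null_frame_inv[_ Ginv].
rewrite Top_contract Ginv null_frame_conj_tr null_gram_tr.
rewrite frame_op_contract contract_half_form contract_frame_comp.
by rewrite -scalemxAr -scalemxAl -scalemxAr -scalemxAl !mulmxA.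
Qed.

Lemma Tsop_frame G E (T : tensor4 R n) Z : null_frame G E ->
  Tsop G T (E *m Z *m E^T) = E *m frame_op (sym_form (frame_comp T E)) Z *m E^T.
Proof.
move=> /null_frame_inv[_ Ginv].
rewrite Tsop_contract Ginv null_frame_conj_tr null_gram_tr frame_op_contract.
have -> : contract (sym_form (frame_comp T E)) Z = contract (frame_comp (sym_form T) E) Z.
  apply/matrixP => A B; rewrite !mxE; apply: eq_bigr => C _; apply: eq_bigr => D _.
  by rewrite frame_comp_sym_form.
by rewrite contract_frame_comp !mulmxA.
Qed.

Lemma nilpotent_frame (f g : 'M[R]_N -> 'M[R]_N) (P : 'M[R]_N -> Prop) E k :
  E \in unitmx -> (forall X, f (E *m X *m E^T) = E *m g X *m E^T) ->
  (forall X, P X -> P (E *m X *m E^T)) ->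
  (forall X, P X -> iter k f X = 0) -> forall X, P X -> iter k g X = 0.
Proof.
move=> Eu fg PE fnil X PX.
have iter_conj j : iter j f (E *m X *m E^T) = E *m iter j g X *m E^T.
  by elim: j => //= j ->; apply: fg.
have EtU : E^T \in unitmx by rewrite unitmx_tr.
rewrite -(mulKmx Eu (iter k g X)) -(mulmxK EtU (E *m _)) -iter_conj fnil.
  by rewrite mul0mx mulmx0.
exact: PE.
Qed.

Lemma Top_nilpotent_frame G E (T : tensor4 R n) k : null_frame G E ->
  (forall F, F^T = - F -> iter k (Top G T) F = 0) ->
  forall F, F^T = - F -> iter k (frame_op (half_form (frame_comp T E))) F = 0.
Proof.
move=> EG T_nil; have [Eu _] := null_frame_inv EG.
apply: (nilpotent_frame Eu _ _ T_nil) => [X|X XT].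
- exact: Top_frame.
- by rewrite null_frame_conj_tr XT mulmxN mulNmx.
Qed.

Lemma Tsop_nilpotent_frame G E (T : tensor4 R n) k : null_frame G E ->
  (forall Z, Z^T = Z -> iter k (Tsop G T) Z = 0) ->
  forall Z, Z^T = Z -> iter k (frame_op (sym_form (frame_comp T E))) Z = 0.
Proof.
move=> EG Ts_nil; have [Eu _] := null_frame_inv EG.
apply: (nilpotent_frame Eu _ _ Ts_nil) => [X|X XT].
- exact: Tsop_frame.
- by rewrite null_frame_conj_tr XT.
Qed.

End NullFrame.

Theorem proposition2 (R : realType) (n : nat) (G : 'M[R]_n.+2) (T : tensor4 R n) :
  lorentzian G ->
  riemann_like_sym T ->
  (exists E : 'M[R]_n.+2, null_frame G E /\
     forall A B C D : 'I_n.+2, (0 < boost_weight A B C D)%R ->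
       frame_comp T E A B C D = 0) ->
  Top_nilpotent G T ->
  Tsop_nilpotent G T ->
  exists E : 'M[R]_n.+2, null_frame G E /\
    forall A B C D : 'I_n.+2,
      boost_weight A B C D = 0%R \/ boost_weight A B C D = 1%R \/
      boost_weight A B C D = 2%R ->
      frame_comp T E A B C D = 0.
Proof.
move=> _ T_sym [E [EG tau_bw_gt0]] [k1 T_nil] [k2 Ts_nil].
have [tau_asym tau_pair] := riemann_like_sym_frame_comp E T_sym.
exists E; split => // A B C D bw012.
have [bw0|bw_gt0] : boost_weight A B C D = 0 \/ 0 < boost_weight A B C D.
  by case: bw012 => [|[]] ->; [left | right | right].
- exact: (tau_bw0_eq0 tau_asym tau_pair tau_bw_gt0
    (Top_nilpotent_frame EG T_nil) (Tsop_nilpotent_frame EG Ts_nil)).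
- exact: tau_bw_gt0.
Qed.
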